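(* Let $G$ be an additive abelian group and let $S\subseteq G$ be a pointed reflection subspace of $G$. (i)(a) For every subset $T\subseteq S$, the set $S_T:=S\cap\langle T\rangle$ is a pointed reflection subspace of the group $\langle T\rangle$. In particular, if $G$ is torsion free and $T$ is finite, then $S_T$ is a semilattice in $\langle T\rangle$. (i)(b) Let $\mathcal M_S$ denote the set of all finite subsets of $S$, directed by inclusion. Then $S$ is the direct union of the family $\{S_T\}_{T\in\mathcal M_S}$. (ii) Let $\mathcal S$ be a family of subsets of $G$ which is a directed set under inclusion, such that each $S'\in\mathcal S$ is a pointed reflection subspace of its $\mathbb Z$-span $\langle S'\rangle$ in $G$. If $G=\bigcup_{S'\in\mathcal S}\langle S'\rangle$, then the direct union $\bigcup_{S'\in\mathcal S}S'$ is a pointed reflection subspace of $G$.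
   Context: For a subset $X$ of an abelian group, $\langle X\rangle$ denotes the subgroup generated by $X$. A symmetric reflection subspace of an abelian group $H$ is a subset $S\subseteq H$ with $\langle S\rangle=H$ and $S-2S\subseteq S$; it is a pointed reflection subspace if moreover $0\in S$. If $H$ is free abelian of finite rank, a pointed reflection subspace of $H$ is called a semilattice in $H$. A set $C$ is the direct union of a family $\{C_i\}_{i\in I}$ of subsets of $C$, directed under inclusion, if $C=\bigcup_{i\in I}C_i$. *)

From HB Require Import structures.
From mathcomp Require Import all_boot all_order all_algebra.
From mathcomp Require Import boolp classical_sets cardinality.
Set Implicit Arguments. Unset Strict Implicit. Unset Printing Implicit Defensive.
Import GRing.Theory.
Local Open Scope ring_scope.
Local Open Scope classical_set_scope.

Inductive gen {G : zmodType} (X : set G) : G -> Prop :=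
  | gen_base x : X x -> gen X x
  | gen_zero : gen X 0
  | gen_sub x y : gen X x -> gen X y -> gen X (x - y).

Definition sym_refl_subspace {G : zmodType} (H S : set G) : Prop :=
  S `<=` H /\ gen S = H /\ (forall x y, S x -> S y -> S (x - y *+ 2)).

Definition pointed_refl_subspace {G : zmodType} (H S : set G) : Prop :=
  sym_refl_subspace H S /\ S 0.

Definition free_finite_rank {G : zmodType} (H : set G) : Prop :=
  exists (n : nat) (b : 'I_n -> G),
    (forall i, H (b i)) /\
    (forall x, H x -> exists c : 'I_n -> int, x = \sum_(i < n) b i *~ c i) /\
    (forall c : 'I_n -> int, \sum_(i < n) b i *~ c i = 0 -> forall i, c i = 0).

Definition semilattice {G : zmodType} (H S : set G) : Prop :=
  free_finite_rank H /\ pointed_refl_subspace H S.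

Definition torsion_free (G : zmodType) : Prop :=
  forall (x : G) (n : nat), (0 < n)%N -> x *+ n = 0 -> x = 0.

Definition directed_family {I : Type} {G : Type} (D : set I) (F : I -> set G) : Prop :=
  D !=set0 /\
  forall i j, D i -> D j -> exists2 k, D k & F i `<=` F k /\ F j `<=` F k.

Definition direct_union {I : Type} {G : Type} (C : set G) (D : set I) (F : I -> set G) : Prop :=
  directed_family D F /\ C = \bigcup_(i in D) F i.

Definition S_of {G : zmodType} (S T : set G) : set G := S `&` gen T.

From HB Require Import structures.
From mathcomp Require Import all_boot all_order all_algebra.
From mathcomp Require Import boolp classical_sets cardinality.
Set Implicit Arguments. Unset Strict Implicit. Unset Printing Implicit Defensive.
Import GRing.Theory Num.Theory.
Local Open Scope ring_scope.
Local Open Scope classical_set_scope.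

(* Parts (i)(a), (i)(b) and (ii) are bookkeeping with generated subgroups; the
   only substantial input is that a finitely generated torsion-free abelian
   group is free of finite rank. This is proved by adjoining generators one at
   a time to a Z-independent family b: a new generator t is either independent
   of b, or some m t (m > 0) is a combination of b. In the latter case, if m
   divides every coefficient then t itself is a combination (no torsion);
   otherwise Euclidean division of a coefficient c_j = q m + r exchanges b_j
   for t - q b_j, and r b_j is then a combination of the new family, with
   0 < r < m. *)

Section Generation.
Variable G : zmodType.
Implicit Types (X Y : set G) (x y : G).

Lemma gen_add X x y : gen X x -> gen X y -> gen X (x + y).
Proof.
move=> gx gy; have -> : x + y = x - (0 - y) by rewrite sub0r opprK.
by apply: gen_sub => //; apply: gen_sub => //; apply: gen_zero.
Qed.

Lemma gen_mulrz X x z : gen X x -> gen X (x *~ z).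
Proof.
have gen_muln n : gen X x -> gen X (x *+ n).
  by move=> gx; elim: n => [|n IHn]; [exact: gen_zero | rewrite mulrS; apply: gen_add].
move=> gx; case: z => n; first by rewrite -pmulrn; apply: gen_muln.
by rewrite NegzE mulrNz -sub0r -pmulrn; apply: gen_sub; [apply: gen_zero | apply: gen_muln].
Qed.

Lemma gen_sum X (I : Type) (r : seq I) (P : pred I) (F : I -> G) :
  (forall i, P i -> gen X (F i)) -> gen X (\sum_(i <- r | P i) F i).
Proof. by move=> gF; apply: big_ind => //; [exact: gen_zero | exact: gen_add]. Qed.

Lemma gen_min X Y : X `<=` gen Y -> gen X `<=` gen Y.
Proof. by move=> XY x; elim=> [z /XY //| |a b _ ga _ gb]; [exact: gen_zero | exact: gen_sub]. Qed.

Lemma gen_mono X Y : X `<=` Y -> gen X `<=` gen Y.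
Proof. by move=> XY; apply: gen_min => x /XY; apply: gen_base. Qed.

Lemma eq_gen X Y : X `<=` gen Y -> Y `<=` gen X -> gen X = gen Y.
Proof. by move=> XY YX; apply/seteqP; split; apply: gen_min. Qed.

Lemma gen_setU1 t X Y : gen X = gen Y -> gen (t |` X) = gen (t |` Y).
Proof.
have sub_setU1 Z W : gen Z = gen W -> Z `<=` gen (t |` W).
  move=> ZW x Zx; have : gen W x by rewrite -ZW; apply: gen_base.
  by apply: gen_mono => y; right.
move=> XY; apply: eq_gen => x [->|Xx]; try by apply: gen_base; left.
  exact: (sub_setU1 _ _ XY).
exact: (sub_setU1 _ _ (esym XY)).
Qed.

Lemma gen_setU1_id X t : gen X t -> gen (t |` X) = gen X.
Proof.
move=> Xt; apply: eq_gen => x; first by case=> [-> //|]; apply: gen_base.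
by move=> Xx; apply: gen_base; right.
Qed.

End Generation.

Section IntegralIndependence.
Variable G : zmodType.

Definition int_indep {k} (b : 'I_k -> G) :=
  forall c : 'I_k -> int, \sum_(i < k) b i *~ c i = 0 -> forall i, c i = 0.

Definition has_Zbasis (X : set G) :=
  exists (k : nat) (b : 'I_k -> G), int_indep b /\ gen (range b) = gen X.

Lemma gen_range_comb k (b : 'I_k -> G) c : gen (range b) (\sum_i b i *~ c i).
Proof. by apply: gen_sum => i _; apply/gen_mulrz/gen_base; exists i. Qed.

Lemma gen_rangeP k (b : 'I_k -> G) x :
  gen (range b) x -> exists c : 'I_k -> int, x = \sum_(i < k) b i *~ c i.
Proof.
elim=> [_ [j _ <-]| |_ _ _ [c ->] _ [c' ->]].
- exists (fun i => (i == j)%:Z); rewrite (bigD1 j) //= eqxx big1 ?addr0 //.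
  by move=> i /negbTE ->; rewrite mulr0z.
- by exists (fun=> 0); rewrite big1 // => i _; rewrite mulr0z.
- by exists (fun i => c i - c' i); rewrite -sumrB; apply: eq_bigr => i _; rewrite mulrzBr.
Qed.

Lemma has_Zbasis_free X : has_Zbasis X -> free_finite_rank (gen X).
Proof.
move=> [k [b [ib <-]]]; exists k, b; split; last by split; [move=> x /gen_rangeP | exact: ib].
by move=> i; apply: gen_base; exists i.
Qed.

Section Exchange.
Variables (k : nat) (b : 'I_k -> G) (t : G) (j : 'I_k) (q : int).

Definition exchanged i := if i == j then t - b j *~ q else b i.

Lemma gen_exchanged : gen (b j |` range exchanged) = gen (t |` range b).
Proof.
have exchanged_j : exchanged j = t - b j *~ q by rewrite /exchanged eqxx.
apply: eq_gen => _ [->|[i _ <-]].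
- by apply: gen_base; right; exists j.
- rewrite /exchanged; case: eqP => _; last by apply: gen_base; right; exists i.
  by apply: gen_sub; [apply: gen_base; left | apply/gen_mulrz/gen_base; right; exists j].
- rewrite -(subrK (b j *~ q) t) -exchanged_j.
  by apply: gen_add; [apply: gen_base; right; exists j | apply/gen_mulrz/gen_base; left].
- case: (eqVneq i j) => [->|ij]; first by apply: gen_base; left.
  by apply: gen_base; right; exists i => //; rewrite /exchanged (negbTE ij).
Qed.

Lemma exchanged_comb e :
  \sum_i exchanged i *~ e i =
  \sum_i b i *~ (if i == j then - (e j * q) else e i) + t *~ e j.
Proof.
rewrite (bigD1 j) //= [in RHS](bigD1 j) //= /exchanged !eqxx.
rewrite (eq_bigr (fun i => b i *~ (if i == j then - (e j * q) else e i))); last first.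
  by move=> i /negbTE ->.
by rewrite mulrzBl -mulrzA mulrNz mulrC [RHS]addrC [RHS]addrA.
Qed.

Variables (m : int) (c : 'I_k -> int).
Hypothesis tm : t *~ m = \sum_i b i *~ c i.

Lemma exchanged_relation :
  b j *~ (c j - q * m) = \sum_i exchanged i *~ (if i == j then m else - c i).
Proof.
rewrite exchanged_comb eqxx tm -big_split /= (bigD1 j) //= eqxx big1 ?addr0.
  by rewrite -mulrzDr addrC mulrC.
by move=> i /negbTE ->; rewrite -mulrzDr addNr mulr0z.
Qed.

Lemma indep_exchanged : int_indep b -> m != 0 -> c j != q * m -> int_indep exchanged.
Proof.
move=> ib m0 cj e he.
pose g i := if i == j then - (e j * q) else e i.
pose f i := g i * m + e j * c i.
have /ib f0 : \sum_i b i *~ f i = 0.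
  have split_f i : b i *~ f i = b i *~ g i *~ m + b i *~ c i *~ e j.
    by rewrite mulrzDr !mulrzA [b i *~ e j *~ _]mulrzAC.
  rewrite (eq_bigr _ (fun i _ => split_f i)) big_split /= -!mulrz_suml -tm.
  by rewrite mulrzAC -mulrzDl -exchanged_comb he mul0rz.
have ej0 : e j = 0.
  move: (f0 j); rewrite /f /g eqxx mulNr -mulrA addrC -mulrBr => /eqP.
  by rewrite mulf_eq0 subr_eq0 (negbTE cj) orbF => /eqP.
move=> i; move: (f0 i); rewrite /f /g ej0 !mul0r addr0.
by case: eqP => [-> //|_] /eqP; rewrite mulf_eq0 (negbTE m0) orbF => /eqP.
Qed.
End Exchange.


Lemma has_Zbasis_adjoin_indep k (b : 'I_k -> G) t : int_indep b ->
  (forall c a, \sum_i b i *~ c i + t *~ a = 0 -> a = 0) -> has_Zbasis (t |` range b).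
Proof.
move=> ib t_indep; pose b' (i : 'I_k.+1) := if unlift ord0 i is Some i' then b i' else t.
have b'0 : b' ord0 = t by rewrite /b' unlift_none.
have b'S i : b' (lift ord0 i) = b i by rewrite /b' liftK.
exists k.+1, b'; split.
  move=> e; rewrite big_ord_recl b'0; under eq_bigr do rewrite b'S.
  rewrite addrC => he; have e0 := t_indep _ _ he.
  rewrite e0 mulr0z addr0 in he.
  by move=> i; case: (unliftP ord0 i) => [i' ->|->] //; apply: ib he i'.
apply: eq_gen.
  move=> _ [i _ <-]; rewrite /b'.
  by case: unlift => [i'|]; apply: gen_base; [right; exists i' | left].
move=> _ [->|[i _ <-]]; apply: gen_base; first by exists ord0.
by exists (lift ord0 i).
Qed.

Section TorsionFree.
Hypothesis tf : torsion_free G.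

Lemma has_Zbasis_adjoin_multiple m k (b : 'I_k -> G) t c :
  (0 < m)%N -> int_indep b -> t *+ m = \sum_i b i *~ c i -> has_Zbasis (t |` range b).
Proof.
elim/ltn_ind: m k b t c => m IH k b t c m0 ib tm.
have mZ0 : m%:Z != 0 by rewrite eqz_nat -lt0n.
have [mc|] := pselect (forall i, (m%:Z %| c i)%Z).
  suff tE : t = \sum_i b i *~ (c i %/ m)%Z.
    by exists k, b; split; rewrite // gen_setU1_id // tE; apply: gen_range_comb.
  apply/eqP; rewrite -subr_eq0; apply/eqP; apply: (tf m0).
  rewrite mulrnBl tm -sumrMnl -sumrB big1 // => i _.
  by rewrite pmulrn -mulrzA divzK // subrr.
move=> /existsNP [j m_ndvd].
pose q := (c j %/ m)%Z; pose r := (c j %% m)%Z.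
have r_neq0 : r != 0 by apply/eqP => /dvdz_mod0P.
have rE : c j - q * m%:Z = `|r|%:Z.
  by rewrite gez0_abs ?modz_ge0 // {1}(divz_eq (c j) m) addrC addKr.
have r_gt0 : (0 < `|r|)%N by rewrite absz_gt0.
have r_lt : (`|r| < m)%N.
  by rewrite -ltz_nat gez0_abs ?modz_ge0 // ltz_pmod // ltz_nat.
have tmZ : t *~ m%:Z = \sum_i b i *~ c i by rewrite -pmulrn.
have cj : c j != q * m%:Z by rewrite -subr_eq0 rE -lt0n.
have rel := exchanged_relation j q tmZ; rewrite rE -pmulrn in rel.
have := IH _ r_lt _ _ _ _ r_gt0 (indep_exchanged tmZ ib mZ0 cj) rel.
by rewrite /has_Zbasis gen_exchanged.
Qed.

Lemma has_Zbasis_adjoin X t : has_Zbasis X -> has_Zbasis (t |` X).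
Proof.
move=> [k [b [ib bX]]]; rewrite /has_Zbasis -(gen_setU1 t bX).
have [t_indep|] := pselect (forall c a, \sum_i b i *~ c i + t *~ a = 0 -> a = 0).
  exact: has_Zbasis_adjoin_indep.
move=> /existsNP [c /existsNP [a /not_implyP [rel a_neq0]]].
apply: (@has_Zbasis_adjoin_multiple `|a| _ _ _ (fun i => - c i * sgz a) _ ib).
  by rewrite absz_gt0; apply/eqP.
rewrite pmulrn abszEsg mulrC mulrzA; move/eqP: rel; rewrite addrC addr_eq0 => /eqP ->.
by rewrite -sumrN mulrz_suml; apply: eq_bigr => i _; rewrite mulrzA mulrNz.
Qed.

Lemma has_Zbasis_finite T : finite_set T -> has_Zbasis T.
Proof.
move=> /finite_seqP [s ->]; elim: s => [|t s IHs].
  exists 0%N, (fun=> 0); split; first by move=> c _ [].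
  by apply: eq_gen => x; [move=> [[]] | rewrite /= in_nil].
have -> : [set` t :: s] = t |` [set` s].
  by apply/seteqP; split=> x /=; rewrite inE => /predU1P.
exact: has_Zbasis_adjoin.
Qed.

End TorsionFree.
End IntegralIndependence.

Section ReflectionSubspaces.
Variable G : zmodType.
Implicit Types (H S T : set G).

Lemma pointed_refl_subspace_S_of H S T :
  pointed_refl_subspace H S -> T `<=` S -> pointed_refl_subspace (gen T) (S_of S T).
Proof.
move=> [[_ [_ S_refl]] S0] TS; split; last by split; [|exact: gen_zero].
split; first by move=> x [].
split.
  apply: eq_gen => [x [] // | x Tx].
  by apply: gen_base; split; [exact: TS | exact: gen_base].
move=> x y [Sx Tx] [Sy Ty]; split; first exact: S_refl.
by apply: gen_sub; rewrite // mulr2n; apply: gen_add.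
Qed.

Lemma semilattice_S_of H S T : torsion_free G ->
  pointed_refl_subspace H S -> T `<=` S -> finite_set T -> semilattice (gen T) (S_of S T).
Proof.
move=> tf SH TS fT; split; last exact: pointed_refl_subspace_S_of SH TS.
exact/has_Zbasis_free/has_Zbasis_finite.
Qed.

Lemma direct_union_S_of S :
  direct_union S [set T | finite_set T /\ T `<=` S] (S_of S).
Proof.
split.
  split; first by exists set0; split; [exact: finite_set0 | exact: sub0set].
  move=> T1 T2 [fT1 T1S] [fT2 T2S]; exists (T1 `|` T2).
    by split; [rewrite finite_setU | move=> x [/T1S|/T2S]].
  by split=> x [Sx Tx]; split=> //; apply: gen_mono Tx => y; [left | right].
apply/seteqP; split=> [x Sx|x [T _ []] //].
by exists [set x]; [split; [exact: finite_set1 | move=> y ->] | split; last exact: gen_base].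
Qed.

Lemma pointed_refl_subspace_bigcup (Fam : set (set G)) :
  directed_family Fam id ->
  (forall S', Fam S' -> pointed_refl_subspace (gen S') S') ->
  pointed_refl_subspace (\bigcup_(S' in Fam) gen S') (\bigcup_(S' in Fam) S').
Proof.
move=> [[S'0 FamS'0] Fam_dir] Fam_refl.
split; last by exists S'0 => //; case: (Fam_refl _ FamS'0).
split; first by move=> x [S' FamS' S'x]; exists S' => //; apply: gen_base.
split.
  apply/seteqP; split.
    move=> x; elim=> [{}x [S' FamS' S'x]| |{}x y _ [S1 FamS1 S1x] _ [S2 FamS2 S2y]].
    - by exists S' => //; apply: gen_base.
    - by exists S'0 => //; apply: gen_zero.
    have [S3 FamS3 [S13 S23]] := Fam_dir _ _ FamS1 FamS2.
    by exists S3 => //; apply: gen_sub; [apply: gen_mono S1x | apply: gen_mono S2y].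
  by move=> x [S' FamS']; apply: gen_mono => y; exists S'.
move=> x y [S1 FamS1 S1x] [S2 FamS2 S2y].
have [S3 FamS3 [S13 S23]] := Fam_dir _ _ FamS1 FamS2.
have [[_ [_ S3_refl]] _] := Fam_refl _ FamS3.
by exists S3 => //; apply: S3_refl; [exact: S13 | exact: S23].
Qed.

End ReflectionSubspaces.

Theorem lemma1p2 (G : zmodType) (S : set G) :
  pointed_refl_subspace setT S ->
  (* (i)(a) *)
  (forall T : set G, T `<=` S -> pointed_refl_subspace (gen T) (S_of S T)) /\
  (torsion_free G ->
     forall T : set G, T `<=` S -> finite_set T -> semilattice (gen T) (S_of S T)) /\
  (* (i)(b) *)
  direct_union S [set T : set G | finite_set T /\ T `<=` S] (S_of S) /\
  (* (ii) *)
  (forall Fam : set (set G),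
     directed_family Fam id ->
     (forall S' : set G, Fam S' -> pointed_refl_subspace (gen S') S') ->
     setT = \bigcup_(S' in Fam) gen S' ->
     pointed_refl_subspace setT (\bigcup_(S' in Fam) S')).
Proof.
move=> S_refl; split; first by move=> T; apply: pointed_refl_subspace_S_of S_refl.
split; first by move=> tf T; apply: semilattice_S_of tf S_refl.
split; first exact: direct_union_S_of.
by move=> Fam Fam_dir Fam_refl ->; apply: pointed_refl_subspace_bigcup.
Qed.
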